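(* Let $X$ be a topological space, $b\in X$, and $\mathcal{U}$ an open covering of $X$ such that $b\in U$ for every $U\in\mathcal{U}$, every $U\in\mathcal{U}$ is path-connected, $U\cap V$ is path-connected for all $U,V\in\mathcal{U}$, and $U\cap V\cap W$ is path-connected for all $U,V,W\in\mathcal{U}$. Let $G$ be a group. Given a family $\{h_U\in H^1(U,b)\}_{U\in\mathcal{U}}$, there exists $h\in H^1(X,b)$ with $r_U(h)=h_U$ for every $U\in\mathcal{U}$ if and only if $r_{U\cap V}(h_U)=r_{U\cap V}(h_V)$ for every pair $U,V\in\mathcal{U}$. If such a class $h$ exists, it is unique.
   Context: Conventions: a path in a space $W$ is a continuous map $[0,1]\to W$; $P(W)$ is the set of paths; $p\cdot q$ is concatenation when $p(1)=q(0)$; homotopies of paths are relative to $\{0,1\}$, $p\sim q$ means homotopic. $G$ has unit $1$. For $b\in W$: a $0$-cochain of $(W,b)$ is a map $c\colon W\to G$ with $c(b)=1$; these form a group $C^0(W,b)$ under pointwise multiplication. A $1$-cochain is a map $u\colon P(W)\to G$ with $u(p)=1$ for the constant path at $b$; it is a cocycle if $u(p)=u(q)$ when $p\sim q$ and $u(p\cdot q)=u(p)u(q)$ when defined. $C^0(W,b)$ acts on cocycles by $(c\bullet u)(p)=c(p(0))u(p)c(p(1))^{-1}$; $H^1(W,b)$ is the set of orbits. For $A\subset W$ with $b\in A$, $r_A\colon H^1(W,b)\to H^1(A,b)$ is induced by restricting cocycles to paths in $A$. *)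

From HB Require Import structures.
From mathcomp Require Import all_boot all_order all_algebra.
From mathcomp Require Import all_classical all_reals.
From mathcomp Require Import topology normedtype Rstruct Rstruct_topology.
From mathcomp Require Import monoid.
Local Notation R := Rdefinitions.R.

Set Implicit Arguments.
Unset Strict Implicit.
Unset Printing Implicit Defensive.

Import Order.TTheory GRing.Theory Num.Theory.
Local Open Scope classical_set_scope.
Local Open Scope ring_scope.

Section TopH1.
Variables (X : topologicalType) (G : groupType).

(* A path is represented by a map R -> X; only its values on [0,1] matter. *)
Definition zeroR : R := 0.
Definition oneR : R := 1.
Definition I01 : set R := `[0, 1].

Definition is_path (W : set X) (p : R -> X) : Prop :=
  {within I01, continuous p} /\ (forall s, I01 s -> W (p s)).

Definition pconcat (p q : R -> X) : R -> X :=
  fun s => if (s <= 1 / 2) then p (2 * s) else q (2 * s - 1).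

Definition path_homotopic (W : set X) (p q : R -> X) : Prop :=
  exists H : R * R -> X,
    [/\ {within I01 `*` I01, continuous H},
        (forall s t, I01 s -> I01 t -> W (H (s, t))),
        (forall s, I01 s -> H (s, 0) = p s /\ H (s, 1) = q s) &
        (forall t, I01 t -> H (0, t) = p 0 /\ H (1, t) = p 1)].

Definition path_connected (A : set X) : Prop :=
  A !=set0 /\ forall x y, A x -> A y ->
    exists p, is_path A p /\ p 0 = x /\ p 1 = y.

(* 0-cochains of (W,b): maps c : X -> G with c b = 1 (values off W are
   irrelevant). *)
Definition cochain0 (b : X) (c : X -> G) : Prop := c b = 1%g.

(* 1-cochains are maps u : (R -> X) -> G; only values on paths in W matter. *)
Definition cochain1 (W : set X) (b : X) (u : (R -> X) -> G) : Prop :=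
  forall p, is_path W p -> (forall s, I01 s -> p s = b) -> u p = 1%g.

Definition cocycle (W : set X) (b : X) (u : (R -> X) -> G) : Prop :=
  [/\ cochain1 W b u,
      (forall p q, is_path W p -> is_path W q -> path_homotopic W p q ->
          u p = u q) &
      (forall p q, is_path W p -> is_path W q -> p 1 = q 0 ->
          u (pconcat p q) = (u p * u q)%g)].

Definition cohomologous (W : set X) (b : X) (u v : (R -> X) -> G) : Prop :=
  exists c, cochain0 b c /\
    forall p, is_path W p -> v p = (c (p zeroR) * u p * (c (p oneR))^-1)%g.

Definition H1class (W : set X) (b : X) (u : (R -> X) -> G) :
    set ((R -> X) -> G) :=
  [set v | cocycle W b v /\ cohomologous W b u v].

Definition H1 (W : set X) (b : X) : set (set ((R -> X) -> G)) :=
  [set O | exists u, cocycle W b u /\ O = H1class W b u].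

Definition restr (A : set X) (b : X) (O : set ((R -> X) -> G)) :
    set ((R -> X) -> G) :=
  [set v | cocycle A b v /\ exists u, O u /\ cohomologous A b u v].

End TopH1.

From HB Require Import structures.
From mathcomp Require Import all_boot all_order all_algebra.
From mathcomp Require Import all_classical all_reals.
From mathcomp Require Import topology normedtype Rstruct Rstruct_topology.
From mathcomp Require Import monoid.
From mathcomp Require Import ring lra.
From Stdlib Require Import ClassicalEpsilon.
Set Implicit Arguments. Unset Strict Implicit. Unset Printing Implicit Defensive.
Import Order.TTheory GRing.Theory Num.Theory.
Local Open Scope classical_set_scope.
Local Open Scope ring_scope.
Local Notation R := Rdefinitions.R.

(* Choose cocycles u_U representing h_U and cochains c_UV with
   u_V = c_UV . u_U on U /\ V.  Evaluating on a path from b to x inside U /\ V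
   gives c_UV x = (u_V d)^-1 (u_U d), so on triple intersections (path-connected
   and containing b) the transition cochains satisfy c_UW = c_VW c_UV.  Fixing
   for every point x a member V_x of the cover containing it, the value
   c_(U,V_x) x * u_U q * (c_(U,V_y) y)^-1 on a path q in U from x to y does not
   depend on U, and is a cocycle on the "small" paths, i.e. those lying in one
   member of the cover.  Such a local cocycle extends uniquely to a cocycle on
   X: subdivide a path (or a homotopy) with a Lebesgue number of the cover and
   multiply the values on the pieces; homotopy invariance reduces to the small
   squares of a grid.  Uniqueness is the same subdivision argument, the
   cochains relating two global cocycles on the various U agreeing on the
   path-connected intersections U /\ V. *)

Lemma continuous_within_comp (T U V : topologicalType) (A : set T) (B : set U)
    (f : T -> U) (g : U -> V) :
  {within A, continuous f} -> {within B, continuous g} ->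
  (forall x, A x -> B (f x)) -> {within A, continuous (g \o f)}.
Proof.
move=> /subspace_continuousP cf /subspace_continuousP cg AB.
apply/subspace_continuousP => x Ax.
apply: cvg_trans; last exact: (cg _ (AB _ Ax)).
move=> P /=; rewrite /within /= => hP.
have := cf x Ax _ hP; rewrite /from_subspace /= !nbhs_simpl /within /=.
by apply: filterS => y /= Py Ay; exact: Py Ay (AB _ Ay).
Qed.

Lemma continuous_compose (T U V : topologicalType) (f : T -> U) (g : U -> V) :
  continuous f -> continuous g -> continuous (g \o f).
Proof. by move=> cf cg x; apply: continuous_comp; [exact: cf | exact: cg]. Qed.

Lemma continuous_fst (T U : topologicalType) : continuous (fun z : T * U => z.1).
Proof. by move=> z; apply: cvg_fst. Qed.

Lemma continuous_snd (T U : topologicalType) : continuous (fun z : T * U => z.2).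
Proof. by move=> z; apply: cvg_snd. Qed.

Lemma continuous_pair (T U V : topologicalType) (f : T -> U) (g : T -> V) :
  continuous f -> continuous g -> continuous (fun z => (f z, g z)).
Proof. by move=> cf cg z; apply: cvg_pair; [exact: cf | exact: cg]. Qed.

Section RealValuedContinuity.
Variable T : topologicalType.
Implicit Types f g : T -> R.

Lemma continuous_addR f g :
  continuous f -> continuous g -> continuous (fun z => f z + g z).
Proof.
move=> cf cg z.
have hf : f x @[x --> z] --> f z := cf z.
have hg : g x @[x --> z] --> g z := cg z.
exact: (@cvgD R R^o _ _ _ f g _ _ hf hg).
Qed.

Lemma continuous_oppR f : continuous f -> continuous (fun z => - f z).
Proof.
move=> cf z; have hf : f x @[x --> z] --> f z := cf z.
exact: (@cvgN R R^o _ _ _ f _ hf).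
Qed.

Lemma continuous_mulR f g :
  continuous f -> continuous g -> continuous (fun z => f z * g z).
Proof. by move=> cf cg z; exact: (@cvgM R _ _ _ f g _ _ (cf z) (cg z)). Qed.

Lemma continuous_minR f g :
  continuous f -> continuous g -> continuous (fun z => Num.min (f z) (g z)).
Proof. by move=> cf cg z; apply: (@continuous_min _ _ f g); [exact: cf | exact: cg]. Qed.

Lemma continuous_maxR f g :
  continuous f -> continuous g -> continuous (fun z => Num.max (f z) (g z)).
Proof. by move=> cf cg z; apply: (@continuous_max _ _ f g); [exact: cf | exact: cg]. Qed.

End RealValuedContinuity.

Lemma continuous_idR : continuous (fun s : R => s).
Proof. by move=> s; exact: cvg_id. Qed.

Lemma continuous_affine (a c : R) : continuous (fun s : R => a + s * c).
Proof.
apply: continuous_addR; first exact: cst_continuous.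
by apply: continuous_mulR; [exact: continuous_idR | exact: cst_continuous].
Qed.

Lemma I01E (s : R) : I01 s = (0 <= s <= 1).
Proof. by rewrite /I01 /= in_itv. Qed.

Lemma I01_0 : I01 0. Proof. by rewrite I01E lexx ler01. Qed.
Lemma I01_1 : I01 1. Proof. by rewrite I01E lexx ler01. Qed.

(* [pconcat p q s] is [p (half1 s)] for [s <= 1/2] and [q (half2 s)] beyond;
   unlike the branches of [pconcat], [half1] and [half2] are continuous on R. *)
Definition half1 (s : R) := Num.min (2 * s) 1.
Definition half2 (s : R) := Num.max (2 * s - 1) 0.

Lemma halves_le (s : R) : s <= 1/2 -> half1 s = 2 * s /\ half2 s = 0.
Proof. by move=> h; rewrite /half1 /half2; split; [apply: min_l | apply: max_r]; lra. Qed.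

Lemma halves_gt (s : R) : ~ (s <= 1/2) -> half1 s = 1 /\ half2 s = 2 * s - 1.
Proof.
move=> h; have h' : 1/2 < s by rewrite ltNge; apply/negP.
by rewrite /half1 /half2; split; [apply: min_r | apply: max_l]; lra.
Qed.

Lemma halves0 : half1 0 = 0 /\ half2 0 = 0.
Proof. by have [-> ->] := @halves_le 0 ltac:(lra); rewrite mulr0. Qed.

Lemma halves1 : half1 1 = 1 /\ half2 1 = 1.
Proof.
have [-> ->] := @halves_gt 1 ltac:(apply/negP; rewrite -ltNge; lra).
by split => //; ring.
Qed.

Lemma halves_I01 (s : R) : I01 s ->
  [/\ 0 <= half1 s, half1 s <= 1, 0 <= half2 s & half2 s <= 1].
Proof.
rewrite I01E => /andP[s0 s1]; case: (boolP (s <= 1/2)) => h.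
  by have [-> ->] := halves_le h; split; lra.
by have [-> ->] := halves_gt (negP h); split; lra.
Qed.

Lemma continuous_half1 : continuous half1.
Proof.
apply: continuous_minR; last exact: cst_continuous.
by apply: continuous_mulR; [exact: cst_continuous | exact: continuous_idR].
Qed.

Lemma continuous_half2 : continuous half2.
Proof.
apply: continuous_maxR; last exact: cst_continuous.
have -> : (fun s : R => 2 * s - 1) = (fun s => -1 + s * 2) by apply: funext => s; ring.
exact: continuous_affine.
Qed.

Section Paths.
Variable X : topologicalType.
Implicit Types (W : set X) (p q : R -> X).

Lemma is_path_ext W p q : is_path W p -> (forall s, I01 s -> p s = q s) -> is_path W q.
Proof.
case=> cp Wp pq; split; last by move=> s Is; rewrite -pq //; apply: Wp.
apply: subspace_eq_continuous cp => s; rewrite in_setE => /pq.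
by rewrite /from_subspace.
Qed.

Lemma is_pathS W W' p : W `<=` W' -> is_path W p -> is_path W' p.
Proof. by move=> sW [cp Wp]; split => // s /Wp /sW. Qed.

Lemma is_pathI W W' p : is_path W p -> is_path W' p -> is_path (W `&` W') p.
Proof. by move=> [cp Wp] [_ W'p]; split => // s Is; split; [exact: Wp | exact: W'p]. Qed.

Lemma is_path_start W p : is_path W p -> W (p 0).
Proof. by move=> [_ Wp]; apply: Wp; exact: I01_0. Qed.

Lemma is_path_end W p : is_path W p -> W (p 1).
Proof. by move=> [_ Wp]; apply: Wp; exact: I01_1. Qed.

Lemma pconcat_start p q : pconcat p q 0 = p 0.
Proof. by rewrite /pconcat mulr0 ifT //; lra. Qed.

Lemma pconcat_end p q : pconcat p q 1 = q 1.
Proof.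
rewrite /pconcat ifF; last by apply/negbTE; rewrite -ltNge; lra.
by congr q; ring.
Qed.

Lemma path_homotopic_ends W p q : path_homotopic W p q -> p 0 = q 0 /\ p 1 = q 1.
Proof.
move=> [H [_ _ H_ends H_sides]].
by rewrite -(H_sides 1 I01_1).1 -(H_sides 1 I01_1).2 (H_ends 0 I01_0).2 (H_ends 1 I01_1).2.
Qed.

Lemma is_path_comp (Y : topologicalType) (K : set Y) W (F : Y -> X) (g : R -> Y) p :
  {within K, continuous F} -> continuous g -> (forall s, I01 s -> K (g s)) ->
  (forall s, I01 s -> W (F (g s))) -> (forall s, I01 s -> p s = F (g s)) ->
  is_path W p.
Proof.
move=> cF cg Kg WF pE; apply: (@is_path_ext _ (F \o g)); last by move=> s /pE ->.
by split => //; apply: continuous_within_comp cF Kg; exact: continuous_subspaceT.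
Qed.

Lemma path_homotopic_comp (Y : topologicalType) (K : set Y) W (F : Y -> X)
    (Gm : R * R -> Y) p q :
  {within K, continuous F} -> (forall y, K y -> W (F y)) -> continuous Gm ->
  (forall s t, I01 s -> I01 t -> K (Gm (s, t))) ->
  (forall t, I01 t -> Gm (0, t) = Gm (0, 0) /\ Gm (1, t) = Gm (1, 0)) ->
  (forall s, I01 s -> p s = F (Gm (s, 0))) -> (forall s, I01 s -> q s = F (Gm (s, 1))) ->
  [/\ is_path W p, is_path W q & path_homotopic W p q].
Proof.
move=> cF WF cG KG Gends pE qE.
have cGt t : continuous (fun s => Gm (s, t)).
  apply: (@continuous_compose _ _ _ (fun s => (s, t)) Gm) => //.
  by apply: continuous_pair; [exact: continuous_idR | exact: cst_continuous].
have path_at t : I01 t -> forall r, (forall s, I01 s -> r s = F (Gm (s, t))) ->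
    is_path W r.
  move=> It r rE; apply: (@is_path_comp _ K W F (fun s => Gm (s, t))) => //.
    by move=> s Is; apply: KG.
  by move=> s Is; apply/WF/KG.
split; [exact: (path_at 0 I01_0 p pE) | exact: (path_at 1 I01_1 q qE) |].
exists (F \o Gm); split.
- apply: continuous_within_comp cF _; first exact: continuous_subspaceT.
  by case=> s t [/= Is It]; apply: KG.
- by move=> s t Is It; apply/WF/KG.
- by move=> s Is; rewrite /= -pE // -qE.
- move=> t It; rewrite /=; have [-> ->] := Gends t It.
  by rewrite -!pE //; [exact: I01_1 | exact: I01_0].
Qed.

Definition subpath p (a b : R) : R -> X := fun s => p (a + s * (b - a)).

Lemma subpath_I01 (a b s : R) : 0 <= a -> a <= b -> b <= 1 -> I01 s ->
  I01 (a + s * (b - a)).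
Proof. by move=> a0 ab b1; rewrite !I01E => /andP[s0 s1]; apply/andP; split; nra. Qed.

Lemma is_path_subpathW W p a b : {within I01, continuous p} -> 0 <= a -> a <= b -> b <= 1 ->
  (forall s, I01 s -> W (subpath p a b s)) -> is_path W (subpath p a b).
Proof.
move=> cp a0 ab b1 Wp.
apply: (@is_path_comp _ I01 W p (fun s => a + s * (b - a))) => //.
- exact: continuous_affine.
- by move=> s; apply: subpath_I01.
Qed.

Lemma is_path_subpath W p a b : is_path W p -> 0 <= a -> a <= b -> b <= 1 ->
  is_path W (subpath p a b).
Proof.
move=> [cp Wp] a0 ab b1; apply: is_path_subpathW => // s Is.
by apply: Wp; apply: subpath_I01.
Qed.

End Paths.

Section GroupProducts.
Variable G : groupType.
Local Open Scope group_scope.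
Implicit Types (f g c : nat -> G).

Lemma prodg_telescope f g c n :
  (forall i, (i < n)%N -> g i = c i * f i * (c i.+1)^-1) ->
  \big[*%g/1]_(0 <= i < n) g i = c 0%N * \big[*%g/1]_(0 <= i < n) f i * (c n)^-1.
Proof.
elim: n => [|n IH] gE; first by rewrite !big_geq // mulg1 mulgV.
rewrite !big_nat_recr //= IH => [|i lt_in]; last by apply: gE; exact: ltnW.
by rewrite gE // !mulgA mulgVK.
Qed.

Lemma prodg_blocks f N K :
  \big[*%g/1]_(0 <= i < N * K) f i =
  \big[*%g/1]_(0 <= i < N) \big[*%g/1]_(0 <= k < K) f (i * K + k)%N.
Proof.
elim: N => [|N IH]; first by rewrite mul0n !big_geq.
rewrite big_nat_recr //= -IH mulSn addnC (big_cat_nat _ (leq_addr _ _)) //=.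
rewrite -{2}(add0n (N * K)%N) big_addn addKn.
by congr (_ * _); apply: eq_bigr => k _; rewrite addnC.
Qed.

Lemma prodg_cat f m n :
  \big[*%g/1]_(0 <= i < m + n) f i =
  \big[*%g/1]_(0 <= i < m) f i * \big[*%g/1]_(0 <= i < n) f (i + m)%N.
Proof. by rewrite (big_cat_nat _ (leq_addr n m)) //= -{2}(add0n m) big_addn addKn. Qed.

End GroupProducts.

Lemma subpath_concat_homotopic (X : topologicalType) (W : set X) (q : R -> X)
    (al mu be : R) :
  is_path W q -> 0 <= al -> al <= mu -> mu <= be -> be <= 1 ->
  [/\ is_path W (pconcat (subpath q al mu) (subpath q mu be)),
      is_path W (subpath q al be) &
      path_homotopic W (pconcat (subpath q al mu) (subpath q mu be)) (subpath q al be)].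
Proof.
move=> [cq Wq] a0 am mb b1.
(* Straight-line homotopy from the reparametrization [g1] of [q], which runs
   through [al, mu] and then [mu, be] at double speed, to the affine [g2]. *)
pose g1 s := al + half1 s * (mu - al) + half2 s * (be - mu).
pose g2 s := al + s * (be - al).
pose Gm (z : R * R) := (1 - z.2) * g1 z.1 + z.2 * g2 z.1.
have cG : continuous Gm.
  apply: continuous_addR; apply: continuous_mulR.
  - by apply: continuous_addR; [exact: cst_continuous | apply/continuous_oppR/continuous_snd].
  - apply: (continuous_compose (@continuous_fst R R)).
    apply: continuous_addR; first apply: continuous_addR; first exact: cst_continuous.
      by apply: continuous_mulR; [exact: continuous_half1 | exact: cst_continuous].
    by apply: continuous_mulR; [exact: continuous_half2 | exact: cst_continuous].
  - exact: continuous_snd.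
  - apply: (@continuous_compose _ _ _ (fun z : R * R => z.1) g2).
      exact: continuous_fst.
    exact: continuous_affine.
have KG s t : I01 s -> I01 t -> I01 (Gm (s, t)).
  move=> Is; rewrite !I01E => /andP[t0 t1].
  have [n0 n1 x0 x1] := halves_I01 Is; move: Is; rewrite I01E => /andP[s0 s1].
  have /andP[h11 h12] : 0 <= g1 s <= 1 by rewrite /g1; apply/andP; split; nra.
  have /andP[h21 h22] : 0 <= g2 s <= 1 by rewrite /g2; apply/andP; split; nra.
  by rewrite /Gm /=; apply/andP; split; nra.
apply: (@path_homotopic_comp _ _ I01 W q Gm) => //.
- move=> t _; rewrite /Gm /g1 /g2 /=.
  by have [-> ->] := halves0; have [-> ->] := halves1; split; ring.
- move=> s _; rewrite /pconcat /subpath /Gm /g1 /=; case: ifP => h.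
    by have [-> ->] := halves_le h; congr q; ring.
  by have [-> ->] := halves_gt (negP (negbT h)); congr q; ring.
- by move=> s _; rewrite /subpath /Gm /g2 /=; congr q; ring.
Qed.

Section CocycleLaw.
Variables (X : topologicalType) (G : groupType).
Implicit Types (W : set X) (p q : R -> X) (u : (R -> X) -> G).

(* Weaker than [cocycle W b u]: no normalisation at [b], and multiplicativity
   only for concatenations that are themselves paths in [W]. *)
Definition cocycle_law W u :=
  (forall p q, is_path W p -> is_path W q -> path_homotopic W p q -> u p = u q) /\
  (forall p q, is_path W p -> is_path W q -> is_path W (pconcat p q) -> p 1 = q 0 ->
     u (pconcat p q) = (u p * u q)%g).

Lemma cocycle_law_of_cocycle W b u : cocycle W b u -> cocycle_law W u.
Proof. by case=> _ hom cat; split => // p q pp pq _; apply: cat. Qed.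

Lemma cocycle_law_ext W u p q : cocycle_law W u -> is_path W p ->
  (forall s, I01 s -> p s = q s) -> u p = u q /\ is_path W q.
Proof.
move=> [hom _] [cp Wp] pq.
have [_ Wq pq_hom] := @path_homotopic_comp X R I01 W p (fun z => z.1) p q cp Wp
  (@continuous_fst R R) (fun s t Is _ => Is) (fun t _ => conj erefl erefl)
  (fun s _ => erefl) (fun s Is => esym (pq s Is)).
by split => //; apply: hom.
Qed.

(* A constant path coincides with its concatenation with itself. *)
Lemma cocycle_law_const W u p x : cocycle_law W u -> is_path W p ->
  (forall s, I01 s -> p s = x) -> u p = 1%g.
Proof.
move=> law pp px.
have ppp s : I01 s -> p s = pconcat p p s.
  move=> Is; have := Is; rewrite I01E => /andP[s0 s1].
  rewrite (px s Is) /pconcat; case: ifP => h.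
    by rewrite px // I01E; apply/andP; split; lra.
  by move/negbT: h; rewrite -ltNge => h; rewrite px // I01E; apply/andP; split; lra.
have [up_pp pp_path] := cocycle_law_ext law pp ppp.
have := law.2 p p pp pp pp_path (etrans (px 1 I01_1) (esym (px 0 I01_0))).
by rewrite -up_pp -{1}(mul1g (u p)) => /mulIg <-.
Qed.

Lemma cocycle_law_split W u q (al mu be : R) : cocycle_law W u -> is_path W q ->
  0 <= al -> al <= mu -> mu <= be -> be <= 1 ->
  u (subpath q al be) = (u (subpath q al mu) * u (subpath q mu be))%g.
Proof.
move=> law qp a0 am mb b1.
have [pc ps hom] := subpath_concat_homotopic qp a0 am mb b1.
rewrite -(law.1 _ _ pc ps hom); apply: law.2 => //.
- by apply: is_path_subpath => //; lra.
- by apply: is_path_subpath => //; lra.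
- by rewrite /subpath; congr q; ring.
Qed.

End CocycleLaw.

Definition tick (i N : nat) : R := i%:R / N%:R.

Lemma tick_ge0 i N : 0 <= tick i N.
Proof. by rewrite /tick divr_ge0 // ler0n. Qed.

Lemma tick_le i j N : (0 < N)%N -> (i <= j)%N -> tick i N <= tick j N.
Proof. by move=> N0 ij; rewrite /tick ler_pM2r ?ler_nat // invr_gt0 ltr0n. Qed.

Lemma tick_le1 j N : (0 < N)%N -> (j <= N)%N -> tick j N <= 1.
Proof. by move=> N0 jN; rewrite /tick ler_pdivrMr ?ltr0n // mul1r ler_nat. Qed.

Lemma tick0 N : tick 0 N = 0.
Proof. by rewrite /tick mul0r. Qed.

Lemma tickNN N : (0 < N)%N -> tick N N = 1.
Proof. by move=> N0; rewrite /tick divff // pnatr_eq0 -lt0n. Qed.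

Lemma tick_I01 j N : (0 < N)%N -> (j <= N)%N -> I01 (tick j N).
Proof. by move=> N0 jN; rewrite I01E tick_ge0 tick_le1. Qed.

Lemma tickS_sub i N : (0 < N)%N -> tick i.+1 N - tick i N = N%:R^-1.
Proof. by move=> N0; rewrite /tick -mulrBl -natrB // subSnn mul1r. Qed.

Definition tickpt (i N : nat) (s : R) : R := tick i N + s * (tick i.+1 N - tick i N).

Lemma tickpt_I01 i N s : (i < N)%N -> I01 s -> I01 (tickpt i N s).
Proof.
move=> iN; have N0 : (0 < N)%N by apply: leq_ltn_trans iN.
by apply: subpath_I01; [exact: tick_ge0 | exact: tick_le | exact: tick_le1].
Qed.

Lemma tickpt0 i N : tickpt i N 0 = tick i N.
Proof. by rewrite /tickpt mul0r addr0. Qed.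

Lemma tickpt1 i N : tickpt i N 1 = tick i.+1 N.
Proof. by rewrite /tickpt mul1r addrC subrK. Qed.

Lemma tickptE i N s : (0 < N)%N -> tickpt i N s = (i%:R + s) / N%:R.
Proof.
move=> N0; rewrite /tickpt tickS_sub // /tick.
have N0' : N%:R != 0 :> R by rewrite pnatr_eq0 -lt0n.
by field.
Qed.

Definition piece (X : topologicalType) (p : R -> X) (N i : nat) :=
  subpath p (tick i N) (tick i.+1 N).

Lemma pieceE (X : topologicalType) (p : R -> X) N i s : piece p N i s = p (tickpt i N s).
Proof. by []. Qed.

Lemma piece_piece (X : topologicalType) (p : R -> X) N K i k : (0 < N)%N -> (0 < K)%N ->
  piece (piece p N i) K k = piece p (N * K) (i * K + k).
Proof.
move=> N0 K0; apply: funext => s; rewrite /piece /subpath; congr p.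
have N0' : N%:R != 0 :> R by rewrite pnatr_eq0 -lt0n.
have K0' : K%:R != 0 :> R by rewrite pnatr_eq0 -lt0n.
by rewrite /tick -!natr1 !natrD !natrM; field; rewrite N0' K0'.
Qed.

Lemma is_path_piece (X : topologicalType) (W : set X) p N i :
  is_path W p -> (i < N)%N -> is_path W (piece p N i).
Proof.
move=> pp iN; have N0 : (0 < N)%N by apply: leq_ltn_trans iN.
by apply: is_path_subpath; [| exact: tick_ge0 | exact: tick_le | exact: tick_le1].
Qed.

Lemma grid_ball (d : R) : 0 < d -> exists2 N, (0 < N)%N &
  forall i, (i < N)%N -> forall s, I01 s -> ball (tick i N) d (tickpt i N s).
Proof.
move=> d0.
have [N dN] : exists N : nat, d^-1 < N.+1%:R.
  exists (Num.Def.archi_bound d^-1); apply: lt_trans (archi_boundP _) _.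
    by rewrite invr_ge0 ltW.
  by rewrite ltr_nat.
exists N.+1 => // i iN s; rewrite I01E => /andP[s0 s1].
rewrite /ball /= /tickpt tickS_sub //.
have N0 : 0 < N.+1%:R^-1 :> R by rewrite invr_gt0 ltr0n.
have Nd : N.+1%:R^-1 < d by rewrite -(invrK d) ltf_pV2 ?posrE ?invr_gt0 ?ltr0n.
rewrite opprD addrA subrr add0r normrN ger0_norm; last by rewrite mulr_ge0 // ltW.
by apply: le_lt_trans Nd; rewrite -[leRHS]mul1r ler_pM2r.
Qed.

Lemma cocycle_law_subdiv (X : topologicalType) (G : groupType) (W : set X)
    (u : (R -> X) -> G) q K :
  cocycle_law W u -> is_path W q -> (0 < K)%N ->
  u q = \big[*%g/1%g]_(0 <= k < K) u (piece q K k).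
Proof.
move=> law qp K0.
have initial j : (j <= K)%N -> u (subpath q 0 (tick j K)) =
    \big[*%g/1%g]_(0 <= k < j) u (piece q K k).
  elim: j => [|j IH] jK.
    rewrite big_geq //; apply: (@cocycle_law_const _ _ W u _ (q 0)) law _ _.
      by apply: is_path_subpath => //; rewrite tick0.
    by move=> s _; rewrite /subpath tick0; congr q; ring.
  rewrite big_nat_recr //= -IH ?(ltnW jK) //; apply: (cocycle_law_split law qp).
  - exact: lexx.
  - exact: tick_ge0.
  - exact: tick_le.
  - exact: tick_le1.
rewrite -initial // tickNN //.
have qE s : I01 s -> q s = subpath q 0 1 s by move=> _; rewrite /subpath; congr q; ring.
by have [-> _] := cocycle_law_ext law qp qE.
Qed.

Lemma lebesgue_number (Y : pseudoMetricType R) (X : topologicalType) (K : set Y)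
    (f : Y -> X) (cU : set (set X)) :
  compact K -> {within K, continuous f} -> (forall U, cU U -> open U) ->
  (forall x, exists U, cU U /\ U x) ->
  exists2 d : R, 0 < d &
    forall z, K z -> exists U, cU U /\ forall w, K w -> ball z d w -> U (f w).
Proof.
move=> cK cf oU cov.
have loc z : K z -> exists U, cU U /\
    exists2 r : R, 0 < r & forall w, K w -> ball z r w -> U (f w).
  move=> Kz; have [U [cUU Ufz]] := cov (f z); exists U; split => //.
  have := (subspace_continuousP _ _).1 cf z Kz _ (open_nbhs_nbhs (conj (oU _ cUU) Ufz)).
  rewrite /= /within nbhs_simpl => /nbhs_ballP[r r0 hr].
  by exists r => // w Kw zw; exact: hr w zw Kw.
apply: contrapT => no_d.
have bad n : exists z, K z /\
    forall U, cU U -> ~ (forall w, K w -> ball z n.+1%:R^-1 w -> U (f w)).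
  apply: contrapT => good; apply: no_d; exists n.+1%:R^-1; first by rewrite invr_gt0 ltr0n.
  move=> z Kz; apply: contrapT => zbad; apply: good; exists z; split => // U cUU hU.
  by apply: zbad; exists U.
have [z zbad] := boolp.choice bad.
have FK : (z @ \oo) K by apply: filterS (nbhs_infty_ge 0) => n _; exact: (zbad n).1.
have [c [Kc clc]] := cK (z @ \oo) _ FK.
have [U [cUU [r r0 hr]]] := loc c Kc.
have [n0 hn0] : exists n0 : nat, 2 / r < n0%:R.
  exists (Num.Def.archi_bound (2 / r)); apply: archi_boundP.
  by rewrite divr_ge0 // ltW.
have Ftail : (z @ \oo) [set z m | m in [set m | (n0 <= m)%N]].
  by apply: filterS (nbhs_infty_ge n0) => m hm /=; exists m.
have [y [[m n0m <-] bcy]] := clc _ _ Ftail (nbhsx_ballx c (r / 2) (divr_gt0 r0 (ltr0n _ 2))).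
apply: ((zbad m).2 U cUU) => w Kw bw; apply: (hr w Kw).
apply: (le_ball _ (ball_triangle bcy bw)).
suff h : m.+1%:R^-1 <= r / 2 by rewrite [X in _ <= X](splitr r) lerD2l.
have n0m' : n0%:R <= m.+1%:R :> R by rewrite ler_nat; exact: leqW.
rewrite ltr_pdivrMr // in hn0.
rewrite ler_pdivlMr // mulrC ler_pdivrMr ?ltr0n // mulrC.
by apply: ltW; apply: lt_le_trans hn0 _; rewrite ler_pM2r.
Qed.

Lemma square_homotopic (X : topologicalType) (W : set X) (H : R * R -> X) :
  {within I01 `*` I01, continuous H} -> (forall s t, I01 s -> I01 t -> W (H (s, t))) ->
  [/\ is_path W (pconcat (fun s => H (s, 0)) (fun t => H (1, t))),
      is_path W (pconcat (fun t => H (0, t)) (fun s => H (s, 1))) &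
      path_homotopic W (pconcat (fun s => H (s, 0)) (fun t => H (1, t)))
                       (pconcat (fun t => H (0, t)) (fun s => H (s, 1)))].
Proof.
move=> cH WH.
pose Gm (z : R * R) := ((1 - z.2) * half1 z.1 + z.2 * half2 z.1,
                        (1 - z.2) * half2 z.1 + z.2 * half1 z.1).
have cG : continuous Gm.
  have c1 : continuous (fun z : R * R => 1 - z.2).
    by apply: continuous_addR; [exact: cst_continuous | apply/continuous_oppR/continuous_snd].
  have ch1 : continuous (fun z : R * R => half1 z.1).
    exact: (@continuous_compose _ _ _ (fun z : R * R => z.1) half1
      (@continuous_fst R R) continuous_half1).
  have ch2 : continuous (fun z : R * R => half2 z.1).
    exact: (@continuous_compose _ _ _ (fun z : R * R => z.1) half2
      (@continuous_fst R R) continuous_half2).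
  by apply: continuous_pair; apply: continuous_addR; apply: continuous_mulR => //;
    exact: continuous_snd.
apply: (@path_homotopic_comp _ _ (I01 `*` I01) W H Gm) => //.
- by case=> s t [/= Is It]; apply: WH.
- move=> s t Is; rewrite !I01E => /andP[t0 t1].
  have [n0 n1 x0 x1] := halves_I01 Is.
  by split; rewrite /= I01E; apply/andP; split; nra.
- move=> t _; rewrite /Gm /=.
  by have [-> ->] := halves0; have [-> ->] := halves1; split; congr (_, _); ring.
- move=> s _; rewrite /pconcat /Gm /=; case: ifP => h.
    by have [-> ->] := halves_le h; congr H; congr (_, _); ring.
  by have [-> ->] := halves_gt (negP (negbT h)); congr H; congr (_, _); ring.
- move=> s _; rewrite /pconcat /Gm /=; case: ifP => h.
    by have [-> ->] := halves_le h; congr H; congr (_, _); ring.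
  by have [-> ->] := halves_gt (negP (negbT h)); congr H; congr (_, _); ring.
Qed.

Definition row_path (X : topologicalType) (H : R * R -> X) (t : R) : R -> X :=
  fun s => H (s, t).
Definition col_path (X : topologicalType) (H : R * R -> X) (s : R) : R -> X :=
  fun t => H (s, t).

Lemma cocycle_law_grid_cell (X : topologicalType) (G : groupType) (U : set X)
    (u : (R -> X) -> G) (H : R * R -> X) N i j :
  cocycle_law U u -> {within I01 `*` I01, continuous H} -> (i < N)%N -> (j < N)%N ->
  (forall s t, I01 s -> I01 t -> U (H (tickpt i N s, tickpt j N t))) ->
  [/\ is_path U (piece (row_path H (tick j N)) N i),
      is_path U (piece (row_path H (tick j.+1 N)) N i),
      is_path U (piece (col_path H (tick i N)) N j),
      is_path U (piece (col_path H (tick i.+1 N)) N j) &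
      (u (piece (row_path H (tick j N)) N i) * u (piece (col_path H (tick i.+1 N)) N j) =
       u (piece (col_path H (tick i N)) N j) * u (piece (row_path H (tick j.+1 N)) N i))%g].
Proof.
move=> law cH iN jN HU.
pose cell (z : R * R) := H (tickpt i N z.1, tickpt j N z.2).
have ccell : {within I01 `*` I01, continuous cell}.
  apply: (continuous_within_comp _ cH); last first.
    by case=> s t [/= Is It]; split; apply: tickpt_I01.
  apply: continuous_subspaceT; apply: continuous_pair.
    apply: (@continuous_compose _ _ _ (fun z : R * R => z.1) (tickpt i N)).
      exact: continuous_fst.
    exact: continuous_affine.
  apply: (@continuous_compose _ _ _ (fun z : R * R => z.2) (tickpt j N)).
    exact: continuous_snd.
  exact: continuous_affine.
have edge (g : R -> R * R) : continuous g -> (forall s, I01 s -> (I01 `*` I01) (g s)) ->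
    is_path U (fun s => cell (g s)).
  move=> cg Ig; apply: (@is_path_comp X _ (I01 `*` I01) U cell g) => //.
  by move=> s /Ig[]; apply: HU.
have cid := continuous_idR; have c0 := @cst_continuous R R 0; have c1 := @cst_continuous R R 1.
have I0 := I01_0; have I1 := I01_1.
have pb : is_path U (fun s => cell (s, 0)) by apply: edge => [|s Is]; [exact: continuous_pair|].
have pt : is_path U (fun s => cell (s, 1)) by apply: edge => [|s Is]; [exact: continuous_pair|].
have pl : is_path U (fun t => cell (0, t)) by apply: edge => [|s Is]; [exact: continuous_pair|].
have pr : is_path U (fun t => cell (1, t)) by apply: edge => [|s Is]; [exact: continuous_pair|].
have -> : piece (row_path H (tick j N)) N i = (fun s => cell (s, 0)).
  by apply: funext => s; rewrite /cell tickpt0.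
have -> : piece (row_path H (tick j.+1 N)) N i = (fun s => cell (s, 1)).
  by apply: funext => s; rewrite /cell tickpt1.
have -> : piece (col_path H (tick i N)) N j = (fun t => cell (0, t)).
  by apply: funext => t; rewrite /cell tickpt0.
have -> : piece (col_path H (tick i.+1 N)) N j = (fun t => cell (1, t)).
  by apply: funext => t; rewrite /cell tickpt1.
have [pbr plt hom] := square_homotopic ccell HU.
split => //.
by rewrite -(law.2 _ _ pb pr pbr) // -(law.2 _ _ pl pt plt) //; exact: law.1 _ _ pbr plt hom.
Qed.

Section Subdivision.
Variables (X : topologicalType) (cU : set (set X)).
Hypothesis open_cU : forall U, cU U -> open U.
Hypothesis cover_cU : forall x, exists U, cU U /\ U x.
Implicit Types (p q : R -> X).

Definition fine p N := (0 < N)%N /\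
  forall i, (i < N)%N -> exists U, cU U /\ is_path U (piece p N i).

Lemma fine_exists p : is_path setT p -> exists N, fine p N.
Proof.
move=> [cp _].
have [d d0 hd] := @lebesgue_number R^o X I01 p cU (@segment_compact R 0 1) cp
  open_cU cover_cU.
have [N N0 hN] := grid_ball d0.
exists N; split => // i iN.
have [U [cUU hU]] := hd (tick i N) (tick_I01 N0 (ltnW iN)).
exists U; split => //; apply: is_path_subpathW => //.
- exact: tick_ge0.
- exact: tick_le.
- exact: tick_le1.
- by move=> s Is; apply: hU; [exact: tickpt_I01 | exact: hN].
Qed.

Lemma fine_refine p N K : fine p N -> (0 < K)%N -> fine p (N * K).
Proof.
move=> [N0 fineN] K0; split; first by rewrite muln_gt0 N0.
move=> j jNK; have jE : j = (j %/ K * K + j %% K)%N by rewrite -divn_eq.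
have [U [cUU pU]] := fineN (j %/ K)%N ltac:(by rewrite ltn_divLR).
exists U; split => //; rewrite jE -piece_piece //.
by apply: is_path_piece pU _; rewrite ltn_mod.
Qed.

Lemma fine_grid (H : R * R -> X) : {within I01 `*` I01, continuous H} ->
  exists2 N, (0 < N)%N & forall i j, (i < N)%N -> (j < N)%N ->
    exists U, cU U /\ forall s t, I01 s -> I01 t -> U (H (tickpt i N s, tickpt j N t)).
Proof.
move=> cH.
have cK : compact (I01 `*` I01 : set (R * R)).
  by apply: compact_setX; exact: segment_compact.
have [d d0 hd] := @lebesgue_number (R^o * R^o)%type X (I01 `*` I01) H cU cK cH
  open_cU cover_cU.
have [N N0 hN] := grid_ball d0.
exists N => // i j iN jN.
have [U [cUU hU]] := hd (tick i N, tick j N)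
  (conj (tick_I01 N0 (ltnW iN)) (tick_I01 N0 (ltnW jN))).
exists U; split => // s t Is It; apply: hU; first by split; apply: tickpt_I01.
by split; apply: hN.
Qed.

Lemma cohomologous_of_small (G : groupType) b (u v : (R -> X) -> G) (c : X -> G) :
  cocycle setT b u -> cocycle setT b v -> cochain0 b c ->
  (forall U p, cU U -> is_path U p -> v p = (c (p 0%R) * u p * (c (p 1%R))^-1)%g) ->
  cohomologous setT b u v.
Proof.
move=> cu cv cb small; exists c; split => // p pp.
have [N [N0 fineN]] := fine_exists pp.
rewrite (cocycle_law_subdiv (cocycle_law_of_cocycle cu) pp N0).
rewrite (cocycle_law_subdiv (cocycle_law_of_cocycle cv) pp N0).
rewrite (prodg_telescope (f := fun i => u (piece p N i))
  (c := fun i => c (p (tick i N)))) => [|i iN].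
  by rewrite /zeroR /oneR tick0 tickNN.
have [U [cUU pU]] := fineN i iN.
by rewrite (small U _ cUU pU) !pieceE tickpt0 tickpt1.
Qed.

End Subdivision.

Lemma piece_concat_l (X : topologicalType) (p q : R -> X) L i : (i < L)%N ->
  forall s, I01 s -> piece p L i s = piece (pconcat p q) (L + L) i s.
Proof.
move=> iL s; rewrite I01E => /andP[s0 s1].
have L0n : (0 < L)%N by apply: leq_ltn_trans iL.
have LL0n : (0 < L + L)%N by rewrite addn_gt0 L0n.
have L0 : 0 < L%:R :> R by rewrite ltr0n.
have iL' : i%:R + 1 <= L%:R :> R by rewrite natr1 ler_nat.
rewrite !pieceE !tickptE // /pconcat natrD.
have -> : (i%:R + s) / (L%:R + L%:R) <= (1/2 : R) by rewrite ler_pdivrMr; lra.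
by congr p; field; lra.
Qed.

Lemma piece_concat_r (X : topologicalType) (p q : R -> X) L i : p 1 = q 0 -> (i < L)%N ->
  forall s, I01 s -> piece q L i s = piece (pconcat p q) (L + L) (i + L) s.
Proof.
move=> pq iL s; rewrite I01E => /andP[s0 s1].
have L0n : (0 < L)%N by apply: leq_ltn_trans iL.
have LL0n : (0 < L + L)%N by rewrite addn_gt0 L0n.
have L0 : 0 < L%:R :> R by rewrite ltr0n.
have i0 : 0 <= i%:R :> R by rewrite ler0n.
rewrite !pieceE !tickptE // /pconcat !natrD.
(* [lra] chokes on the equation [pq] between points of [X]. *)
case: ifP => [h|_]; last by clear pq; congr q; field; lra.
have [-> ->] : s = 0 /\ i%:R = 0 :> R.
  by clear pq; move: h; rewrite ler_pdivrMr; [move=> h; split; lra | lra].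
by rewrite addr0 add0r mul0r -pq; congr p; clear pq; field; lra.
Qed.

Section Extension.
Variables (X : topologicalType) (G : groupType) (cU : set (set X)) (F : (R -> X) -> G).
Hypothesis open_cU : forall U, cU U -> open U.
Hypothesis cover_cU : forall x, exists U, cU U /\ U x.
Hypothesis law_F : forall U, cU U -> cocycle_law U F.
Implicit Types (p q r : R -> X).
Local Notation fine := (fine cU).

Definition subdiv_prod p N := \big[*%g/1%g]_(0 <= i < N) F (piece p N i).

Lemma fine_piece_ext p N i r : fine p N -> (i < N)%N ->
  (forall s, I01 s -> piece p N i s = r s) ->
  (exists U, cU U /\ is_path U r) /\ F (piece p N i) = F r.
Proof.
move=> [_ fp] iN pr; have [U [cUU pU]] := fp i iN.
have [-> rU] := cocycle_law_ext (law_F cUU) pU pr.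
by split => //; exists U.
Qed.

Lemma subdiv_prod_ext p p' N : fine p N ->
  (forall i, (i < N)%N -> forall s, I01 s -> piece p N i s = piece p' N i s) ->
  fine p' N /\ subdiv_prod p N = subdiv_prod p' N.
Proof.
move=> fp pp'; split; first by split => [|i iN]; [exact: fp.1 | exact: (fine_piece_ext fp iN (pp' i iN)).1].
by apply: eq_big_nat => i /andP[_ iN]; exact: (fine_piece_ext fp iN (pp' i iN)).2.
Qed.

Lemma subdiv_prod_refine p N K : fine p N -> (0 < K)%N ->
  subdiv_prod p N = subdiv_prod p (N * K).
Proof.
move=> [N0 fp] K0; rewrite /subdiv_prod prodg_blocks; apply: eq_big_nat => i /andP[_ iN].
have [U [cUU pU]] := fp i iN.
rewrite (cocycle_law_subdiv (law_F cUU) pU K0); apply: eq_big_nat => k _.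
by rewrite piece_piece.
Qed.

Lemma subdiv_prod_unique p N M : fine p N -> fine p M ->
  subdiv_prod p N = subdiv_prod p M.
Proof.
move=> fN fM; rewrite (subdiv_prod_refine fN fM.1) (subdiv_prod_refine fM fN.1).
by rewrite mulnC.
Qed.

Definition extend p : G := subdiv_prod p (epsilon (inhabits 1%N) (fine p)).

Lemma extendE p N : fine p N -> extend p = subdiv_prod p N.
Proof.
move=> fN; apply: (subdiv_prod_unique _ fN).
exact: (epsilon_spec (inhabits 1%N) (fine p) (ex_intro _ N fN)).
Qed.

Lemma extend_small U q : cU U -> is_path U q -> extend q = F q.
Proof.
move=> cUU qp.
have qE s : I01 s -> q s = piece q 1 0 s by move=> _; rewrite pieceE tickptE // divr1 add0r.
have [-> pq] := cocycle_law_ext (law_F cUU) qp qE.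
rewrite (@extendE _ 1) /subdiv_prod ?big_nat1 //.
by split => // i; rewrite ltnS leqn0 => /eqP ->; exists U.
Qed.

Lemma extend_concat p q : is_path setT p -> is_path setT q -> p 1 = q 0 ->
  extend (pconcat p q) = (extend p * extend q)%g.
Proof.
move=> pp qp pq.
have [Np fp] := fine_exists open_cU cover_cU pp.
have [Nq fq] := fine_exists open_cU cover_cU qp.
have fpL : fine p (Np * Nq) := fine_refine fp fq.1.
have fqL : fine q (Np * Nq) by rewrite mulnC; exact: fine_refine fq fp.1.
move: (Np * Nq)%N fpL fqL => L fpL fqL.
have first_half i : (i < L)%N ->
    (exists U, cU U /\ is_path U (piece (pconcat p q) (L + L) i)) /\
    F (piece p L i) = F (piece (pconcat p q) (L + L) i).
  by move=> iL; apply: (fine_piece_ext fpL iL); exact: piece_concat_l.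
have second_half i : (i < L)%N ->
    (exists U, cU U /\ is_path U (piece (pconcat p q) (L + L) (i + L))) /\
    F (piece q L i) = F (piece (pconcat p q) (L + L) (i + L)).
  by move=> iL; apply: (fine_piece_ext fqL iL); exact: piece_concat_r.
have fpq : fine (pconcat p q) (L + L).
  split => [|j jL]; first by rewrite addn_gt0 fpL.1.
  case: (ltnP j L) => [jL' | Lj]; first exact: (first_half j jL').1.
  by rewrite -(subnK Lj); apply: (second_half _ _).1; rewrite ltn_subLR.
rewrite (extendE fpq) (extendE fpL) (extendE fqL) /subdiv_prod prodg_cat.
congr (_ * _)%g; apply: eq_big_nat => i /andP[_ iL].
  exact: esym (first_half i iL).2.
exact: esym (second_half i iL).2.
Qed.

Section HomotopyGrid.
Variables (H : R * R -> X) (x0 x1 : X) (N : nat).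
Hypothesis cH : {within I01 `*` I01, continuous H}.
Hypothesis H_sides : forall t, I01 t -> H (0, t) = x0 /\ H (1, t) = x1.
Hypothesis N0 : (0 < N)%N.
Hypothesis cells : forall i j, (i < N)%N -> (j < N)%N -> exists U, cU U /\
  forall s t, I01 s -> I01 t -> U (H (tickpt i N s, tickpt j N t)).

Lemma fine_row j : (j <= N)%N -> fine (row_path H (tick j N)) N.
Proof.
move=> jN; split => // i iN.
have N1 : (N.-1 < N)%N by rewrite prednK.
case: (ltnP j N) => [jN' | Nj].
  have [U [cUU HU]] := cells iN jN'.
  by have [? _ _ _ _] := cocycle_law_grid_cell (law_F cUU) cH iN jN' HU; exists U.
have [U [cUU HU]] := cells iN N1.
have [_ ? _ _ _] := cocycle_law_grid_cell (law_F cUU) cH iN N1 HU.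
have -> : j = N.-1.+1 by rewrite prednK //; apply/eqP; rewrite eqn_leq jN Nj.
by exists U.
Qed.

(* Telescoping over the cells of a row: the vertical sides at both ends are
   constant paths, hence contribute nothing. *)
Lemma subdiv_prod_row_step j : (j < N)%N ->
  subdiv_prod (row_path H (tick j N)) N = subdiv_prod (row_path H (tick j.+1 N)) N.
Proof.
move=> jN.
rewrite /subdiv_prod (prodg_telescope (f := fun i => F (piece (row_path H (tick j.+1 N)) N i))
  (c := fun i => F (piece (col_path H (tick i N)) N j))) => [|i iN]; last first.
  have [U [cUU HU]] := cells iN jN.
  by have [_ _ _ _ <-] := cocycle_law_grid_cell (law_F cUU) cH iN jN HU; rewrite mulgK.
have col0 : F (piece (col_path H (tick 0 N)) N j) = 1%g.
  have [U [cUU HU]] := cells N0 jN.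
  have [_ _ pl _ _] := cocycle_law_grid_cell (law_F cUU) cH N0 jN HU.
  apply: (cocycle_law_const (law_F cUU) pl (x := x0)) => t It.
  by rewrite pieceE /col_path tick0; exact: (H_sides (tickpt_I01 jN It)).1.
have colN : F (piece (col_path H (tick N N)) N j) = 1%g.
  have N1 : (N.-1 < N)%N by rewrite prednK.
  have [U [cUU HU]] := cells N1 jN.
  have [_ _ _ pr _] := cocycle_law_grid_cell (law_F cUU) cH N1 jN HU.
  rewrite prednK // in pr.
  apply: (cocycle_law_const (law_F cUU) pr (x := x1)) => t It.
  by rewrite pieceE /col_path tickNN //; exact: (H_sides (tickpt_I01 jN It)).2.
by rewrite col0 colN invg1 mul1g mulg1.
Qed.

Lemma subdiv_prod_rows :
  subdiv_prod (row_path H (tick 0 N)) N = subdiv_prod (row_path H (tick N N)) N.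
Proof.
suff rowj j : (j <= N)%N -> subdiv_prod (row_path H (tick j N)) N =
  subdiv_prod (row_path H (tick 0 N)) N by rewrite rowj.
by elim: j => // j IH jN; rewrite -subdiv_prod_row_step // IH // ltnW.
Qed.

End HomotopyGrid.

Lemma extend_homotopic p q : is_path setT p -> is_path setT q ->
  path_homotopic setT p q -> extend p = extend q.
Proof.
move=> pp qp [H [cH _ H_ends H_sides]].
have [N N0 cells] := fine_grid open_cU cover_cU cH.
have [fp ep] : fine p N /\ subdiv_prod (row_path H (tick 0 N)) N = subdiv_prod p N.
  apply: subdiv_prod_ext => [|i iN s Is]; first exact: fine_row cH N0 cells _ (leq0n N).
  by rewrite !pieceE /row_path tick0; exact: (H_ends _ (tickpt_I01 iN Is)).1.
have [fq eq] : fine q N /\ subdiv_prod (row_path H (tick N N)) N = subdiv_prod q N.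
  apply: subdiv_prod_ext => [|i iN s Is]; first exact: fine_row cH N0 cells _ (leqnn N).
  by rewrite !pieceE /row_path tickNN //; exact: (H_ends _ (tickpt_I01 iN Is)).2.
by rewrite (extendE fp) (extendE fq) -ep -eq; exact: subdiv_prod_rows cH H_sides N0 cells.
Qed.

Lemma extend_cocycle b : cocycle setT b extend.
Proof.
split.
- move=> p pp pb; have [U [cUU Ub]] := cover_cU b.
  have pU : is_path U p by split; [exact: pp.1 | move=> s /pb ->].
  by rewrite (extend_small cUU pU); exact: cocycle_law_const (law_F cUU) pU pb.
- by move=> p q pp qp; exact: extend_homotopic.
- by move=> p q pp qp pq; exact: extend_concat.
Qed.

End Extension.

Section Classes.
Variables (X : topologicalType) (G : groupType).
Implicit Types (W A : set X) (u v w : (R -> X) -> G).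
Local Open Scope group_scope.

Lemma coh_refl W b u : cohomologous W b u u.
Proof. by exists (fun _ => 1); split => // p _; rewrite mul1g invg1 mulg1. Qed.

Lemma coh_sym W b u v : cohomologous W b u v -> cohomologous W b v u.
Proof.
case=> c [cb cE]; exists (fun x => (c x)^-1); split; first by rewrite /cochain0 cb invg1.
by move=> p pp; rewrite cE // invgK !mulgA mulVg mul1g mulgVK.
Qed.

Lemma coh_trans W b u v w :
  cohomologous W b u v -> cohomologous W b v w -> cohomologous W b u w.
Proof.
case=> c [cb cE] [d [db dE]]; exists (fun x => d x * c x); split.
  by rewrite /cochain0 cb db mulg1.
by move=> p pp; rewrite dE // cE // invgM !mulgA.
Qed.

Lemma cohS A W b u v : A `<=` W -> cohomologous W b u v -> cohomologous A b u v.
Proof. by move=> sA [c [cb cE]]; exists c; split => // p /(is_pathS sA) /cE. Qed.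

Lemma cocycleS A W b u : A `<=` W -> cocycle W b u -> cocycle A b u.
Proof.
move=> sA [u1 hom cat]; split.
- by move=> p /(is_pathS sA) /u1.
- move=> p q pp qp [H [cH WH H0 H1]].
  apply: hom; [exact: is_pathS sA pp | exact: is_pathS sA qp |].
  by exists H; split => // s t Is It; apply/sA/WH.
- by move=> p q /(is_pathS sA) pp /(is_pathS sA) qp; exact: cat.
Qed.

Lemma H1class_eq W b u v : cohomologous W b u v -> H1class W b u = H1class W b v.
Proof.
move=> uv; apply/seteqP; split => w [cw h]; split => //.
  exact: coh_trans (coh_sym uv) h.
exact: coh_trans uv h.
Qed.

Lemma H1class_coh W b u v : cocycle W b v -> H1class W b u = H1class W b v ->
  cohomologous W b u v.
Proof.
move=> cv uv; have : H1class W b v v by split => //; exact: coh_refl.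
by rewrite -uv => -[].
Qed.

Lemma restr_H1class A W b u : A `<=` W -> cocycle W b u ->
  restr A b (H1class W b u) = H1class A b u.
Proof.
move=> sA cu; apply/seteqP; split => v /=.
  by move=> [cv [w [[cw uw] wv]]]; split => //; exact: coh_trans (cohS sA uw) wv.
by move=> [cv uv]; split => //; exists u; split => //; split => //; exact: coh_refl.
Qed.

Lemma restr_restr A B W b (h : set ((R -> X) -> G)) : A `<=` B -> B `<=` W -> H1 W b h ->
  restr A b (restr B b h) = restr A b h.
Proof.
move=> sAB sBW [u [cu ->]].
rewrite !restr_H1class //; [exact: subset_trans sBW | exact: cocycleS cu].
Qed.

Lemma cochain_along_path W b u v c d x : cochain0 b c ->
  (forall p, is_path W p -> v p = c (p zeroR) * u p * (c (p oneR))^-1) ->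
  is_path W d -> d 0%R = b -> d 1%R = x -> c x = (v d)^-1 * u d.
Proof.
move=> cb cE pd d0 d1; rewrite (cE d pd) /zeroR /oneR d0 d1 cb mul1g.
by rewrite invgM invgK mulgVK.
Qed.

End Classes.

Section Gluing.
Variables (X : topologicalType) (G : groupType) (b : X) (cU : set (set X)).
Hypothesis open_cU : forall U, cU U -> open U.
Hypothesis cover_cU : forall x, exists U, cU U /\ U x.
Hypothesis cU_b : forall U, cU U -> U b.
Hypothesis pconn2 : forall U V, cU U -> cU V -> path_connected (U `&` V).
Hypothesis pconn3 : forall U V W, cU U -> cU V -> cU W -> path_connected (U `&` V `&` W).
Variable V_ : X -> set X.
Hypothesis V_P : forall x, cU (V_ x) /\ V_ x x.
Local Open Scope group_scope.

(* An arbitrary set when no member of the cover contains [q]. *)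
Definition host (q : R -> X) : set X :=
  epsilon (inhabits setT) (fun L => cU L /\ is_path L q).

Lemma hostP L q : cU L -> is_path L q -> cU (host q) /\ is_path (host q) q.
Proof.
move=> cL pL.
exact: (epsilon_spec _ (fun L => cU L /\ is_path L q) (ex_intro _ L (conj cL pL))).
Qed.

Section Transition.
Variables (u : set X -> (R -> X) -> G) (c : set X -> set X -> X -> G).
Hypothesis u_cocycle : forall U, cU U -> cocycle U b (u U).
Hypothesis c_coh : forall U V, cU U -> cU V -> cochain0 b (c U V) /\
  forall p, is_path (U `&` V) p -> u V p = c U V (p zeroR) * u U p * (c U V (p oneR))^-1.

Lemma transition_cocycle L L' V x : cU L -> cU L' -> cU V -> L x -> L' x -> V x ->
  c L V x = c L' V x * c L L' x.
Proof.
move=> cL cL' cV Lx L'x Vx; have [_ conn] := pconn3 cL cL' cV.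
have [d [pd [d0 d1]]] := conn b x (conj (conj (cU_b cL) (cU_b cL')) (cU_b cV))
  (conj (conj Lx L'x) Vx).
have along U W : cU U -> cU W -> L `&` L' `&` V `<=` U `&` W ->
    c U W x = (u W d)^-1 * u U d.
  move=> cUU cW sub; have [cb cE] := c_coh cUU cW.
  exact: cochain_along_path cb cE (is_pathS sub pd) d0 d1.
rewrite (along L V) ?(along L' V) ?(along L L') //; first by rewrite !mulgA mulgK.
all: by move=> y [[]].
Qed.

Definition glued_local (q : R -> X) : G :=
  c (host q) (V_ (q 0%R)) (q 0%R) * u (host q) q * (c (host q) (V_ (q 1%R)) (q 1%R))^-1.

Lemma glued_localE L q : cU L -> is_path L q ->
  glued_local q = c L (V_ (q 0%R)) (q 0%R) * u L q * (c L (V_ (q 1%R)) (q 1%R))^-1.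
Proof.
move=> cL pL; have [cH pH] := hostP cL pL.
have [cV0 V0] := V_P (q 0%R); have [cV1 V1] := V_P (q 1%R).
rewrite /glued_local ((c_coh cL cH).2 q (is_pathI pL pH)) /zeroR /oneR.
rewrite (transition_cocycle cL cH cV0 (is_path_start pL) (is_path_start pH) V0).
rewrite (transition_cocycle cL cH cV1 (is_path_end pL) (is_path_end pH) V1).
by rewrite invgM !mulgA.
Qed.

Lemma glued_local_law U : cU U -> cocycle_law U glued_local.
Proof.
move=> cUU; have [_ hom cat] := u_cocycle cUU; split.
- move=> p q pp qp pq; have [e0 e1] := path_homotopic_ends pq.
  by rewrite !(glued_localE cUU) // (hom p q pp qp pq) e0 e1.
- move=> p q pp qp ppq pq.
  rewrite !(glued_localE cUU) // (cat p q pp qp pq) pconcat_start pconcat_end pq.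
  by rewrite !mulgA mulgVK.
Qed.

Lemma glued_coh U : cU U -> cohomologous U b (u U) (extend cU glued_local).
Proof.
move=> cUU; exists (fun x => c U (V_ x) x); split; first exact: (c_coh cUU (V_P b).1).1.
move=> q qU; rewrite (extend_small glued_local_law cUU qU).
exact: glued_localE.
Qed.

End Transition.

Lemma glue_classes (hU : set X -> set ((R -> X) -> G)) :
  (forall U, cU U -> H1 U b (hU U)) ->
  (forall U V, cU U -> cU V -> restr (U `&` V) b (hU U) = restr (U `&` V) b (hU V)) ->
  exists h, H1 setT b h /\ forall U, cU U -> restr U b h = hU U.
Proof.
move=> hH1 compat.
have ex_u U : exists v, cU U -> cocycle U b v /\ hU U = H1class U b v.
  by case: (pselect (cU U)) => [/hH1[v [cv ->]] | nU]; [exists v | exists (fun _ => 1)].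
have [u uP] := boolp.choice ex_u.
have ex_c (UV : set X * set X) : exists c0 : X -> G, cU UV.1 -> cU UV.2 ->
    cochain0 b c0 /\ forall p, is_path (UV.1 `&` UV.2) p ->
      u UV.2 p = c0 (p zeroR) * u UV.1 p * (c0 (p oneR))^-1.
  case: UV => U V /=; case: (pselect (cU U /\ cU V)) => [[cUU cUV] | nUV]; last first.
    by exists (fun _ => 1) => cUU cUV; case: nUV.
  have [cu uE] := uP U cUU; have [cv vE] := uP V cUV.
  suff [c0 ?] : cohomologous (U `&` V) b (u U) (u V) by exists c0.
  apply: H1class_coh; first exact: cocycleS (@subIsetr _ U V) cv.
  have := compat U V cUU cUV.
  by rewrite uE vE !restr_H1class //.
have [c cP] := boolp.choice ex_c.
have u_cocycle U : cU U -> cocycle U b (u U) by move=> /uP[].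
have c_coh U V : cU U -> cU V -> _ := fun cUU cUV => cP (U, V) cUU cUV.
exists (H1class setT b (extend cU (glued_local u (fun U V => c (U, V))))); split.
  by eexists; split; last reflexivity; exact: extend_cocycle open_cU cover_cU
    (glued_local_law u_cocycle c_coh) b.
move=> U cUU; rewrite restr_H1class //; last exact: extend_cocycle open_cU cover_cU
  (glued_local_law u_cocycle c_coh) b.
rewrite (uP U cUU).2; apply/H1class_eq/coh_sym; exact: glued_coh.
Qed.

Lemma glue_unique (h h' : set ((R -> X) -> G)) : H1 setT b h -> H1 setT b h' ->
  (forall U, cU U -> restr U b h = restr U b h') -> h = h'.
Proof.
move=> [u [cu ->]] [u' [cu' ->]] hh'.
have ex_c U : exists c0 : X -> G, cU U -> cochain0 b c0 /\
    forall p, is_path U p -> u' p = c0 (p zeroR) * u p * (c0 (p oneR))^-1.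
  case: (pselect (cU U)) => [cUU | nU]; last by exists (fun _ => 1).
  suff [c0 ?] : cohomologous U b u u' by exists c0.
  apply: H1class_coh; first exact: cocycleS cu'.
  by rewrite -!(@restr_H1class _ _ U setT) // hh'.
have [c cP] := boolp.choice ex_c.
have c_agree U V x : cU U -> cU V -> U x -> V x -> c U x = c V x.
  move=> cUU cUV Ux Vx; have [_ conn] := pconn2 cUU cUV.
  have [d [pd [d0 d1]]] := conn b x (conj (cU_b cUU) (cU_b cUV)) (conj Ux Vx).
  have [cbU cEU] := cP U cUU; have [cbV cEV] := cP V cUV.
  rewrite (cochain_along_path cbU cEU (is_pathS (@subIsetl _ U V) pd) d0 d1).
  by rewrite (cochain_along_path cbV cEV (is_pathS (@subIsetr _ U V) pd) d0 d1).
apply: H1class_eq; apply: (@cohomologous_of_small _ _ open_cU cover_cU _ _ _ _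
  (fun x => c (V_ x) x) cu cu'); first exact: (cP _ (V_P b).1).1.
move=> U p cUU pU; rewrite ((cP U cUU).2 p pU) /zeroR /oneR.
have [cV0 V0] := V_P (p 0%R); have [cV1 V1] := V_P (p 1%R).
rewrite (c_agree U _ _ cUU cV0 (is_path_start pU) V0).
by rewrite (c_agree U _ _ cUU cV1 (is_path_end pU) V1).
Qed.

End Gluing.
Theorem theorem5p1 (X : topologicalType) (b : X) (cU : set (set X))
  (G : groupType) (hU : set X -> set ((Rdefinitions.R -> X) -> G)) :
  (forall U, cU U -> open U) ->
  \bigcup_(U in cU) U = setT ->
  (forall U, cU U -> U b) ->
  (forall U, cU U -> path_connected U) ->
  (forall U V, cU U -> cU V -> path_connected (U `&` V)) ->
  (forall U V W, cU U -> cU V -> cU W -> path_connected (U `&` V `&` W)) ->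
  (forall U, cU U -> H1 U b (hU U)) ->
  ((exists h, H1 setT b h /\ forall U, cU U -> restr U b h = hU U) <->
   (forall U V, cU U -> cU V ->
      restr (U `&` V) b (hU U) = restr (U `&` V) b (hU V))) /\
  (forall h h', H1 setT b h -> H1 setT b h' ->
     (forall U, cU U -> restr U b h = hU U) ->
     (forall U, cU U -> restr U b h' = hU U) -> h = h').
Proof.
(* The path-connectedness of the members themselves is not needed: it is the
   case U = V of the pairwise hypothesis. *)
move=> open_cU cover cU_b _ pconn2 pconn3 hH1.
have cover_cU x : exists U, cU U /\ U x.
  by have : [set: X] x by []; rewrite -cover => -[U cUU Ux]; exists U.
have [V_ V_P] := boolp.choice cover_cU.
split; first split.
- move=> [h [hh h_restr]] U V cUU cUV.
  by rewrite -(h_restr U cUU) -(h_restr V cUV) !(restr_restr _ _ hh).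
- exact: (glue_classes open_cU cover_cU cU_b pconn3 V_P hH1).
- move=> h h' hh hh' h_restr h'_restr.
  apply: (glue_unique open_cU cover_cU cU_b pconn2 V_P hh hh') => U cUU.
  by rewrite h_restr // h'_restr.
Qed.
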